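(* Let $R$ be a commutative ring, $L$ an $R$-module and $S\subseteq L$ a subset. Then the subset module closure $\mathrm{cl}_{S,L}$, as a pair operation on all pairs $N\subseteq M$ of $R$-modules, is functorial and residual.
   Context: For $R$-modules $N\subseteq M$, $N^{\mathrm{cl}_{S,L}}_M=\{u\in M:\ s\otimes u\in\operatorname{im}(L\otimes_R N\to L\otimes_R M)\text{ for all } s\in S\}$, the map induced by the inclusion $N\hookrightarrow M$. A pair operation $p$ (here $p(N,M)=N^{\mathrm{cl}_{S,L}}_M$) is functorial if $g(p(N,M))\subseteq p(g(N),M')$ for every $R$-linear map $g:M\to M'$ and submodule $N\subseteq M$; it is residual if $p(N,M)=\pi^{-1}(p(N/P,M/P))$ whenever $P\subseteq N\subseteq M$, where $\pi:M\to M/P$ is the quotient map. *)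

(* Tensor products are built honestly as the free abelian
   group on L x M (multinomials' freeg) modulo the subgroup generated by
   the bilinearity/balancing relations. *)
From HB Require Import structures.
From mathcomp Require Import all_boot all_order all_algebra.
From mathcomp Require Import freeg.
Set Implicit Arguments. Unset Strict Implicit. Unset Printing Implicit Defensive.
Import Order.TTheory GRing.Theory Num.Theory.
Local Open Scope ring_scope.

Section Tensor.
Variable R : comPzRingType.

Definition is_submodule (M : lmodType R) (N : M -> Prop) : Prop :=
  N 0 /\ forall (a : R) (x y : M), N x -> N y -> N (a *: x + y).

Inductive zspan (G : zmodType) (S : G -> Prop) : G -> Prop :=
| zspan0 : zspan S 0
| zspan_gen x : S x -> zspan S x
| zspan_sub x y : zspan S x -> zspan S y -> zspan S (x - y).

Section TP.
Variables L M : lmodType R.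

Definition tfree := {freeg (L * M)%type / int}.
Definition tgen (l : L) (m : M) : tfree := << (l, m) >>.

Definition tensor_rel (x : tfree) : Prop :=
  (exists l1 l2 m, x = tgen (l1 + l2) m - tgen l1 m - tgen l2 m) \/
  (exists l m1 m2, x = tgen l (m1 + m2) - tgen l m1 - tgen l m2) \/
  (exists (r : R) l m, x = tgen (r *: l) m - tgen l (r *: m)).

Definition tensor_eq (x y : tfree) : Prop := zspan tensor_rel (x - y).

(* the image of L (x)_R N -> L (x)_R M is the class of the subgroup
   generated by the l (x) n with n in N *)
Definition tensor_image_gen (N : M -> Prop) (x : tfree) : Prop :=
  exists l n, N n /\ x = tgen l n.

Definition tensor_in_image (N : M -> Prop) (s : L) (u : M) : Prop :=
  exists x, zspan (tensor_image_gen N) x /\ tensor_eq (tgen s u) x.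

End TP.

Definition subset_cl (L : lmodType R) (S : L -> Prop) (M : lmodType R)
  (N : M -> Prop) : M -> Prop :=
  fun u => forall s, S s -> tensor_in_image N s u.

Definition image_set (A B : Type) (f : A -> B) (X : A -> Prop) : B -> Prop :=
  fun y => exists x, X x /\ f x = y.

Definition cl_functorial (L : lmodType R) (S : L -> Prop) : Prop :=
  forall (M M' : lmodType R) (g : {linear M -> M'}) (N : M -> Prop),
    is_submodule N ->
    forall u, subset_cl S N u -> subset_cl S (image_set g N) (g u).

(* residuality: M/P is represented by an arbitrary surjective linear map
   pi : M -> Q with kernel exactly P; N/P is then pi(N). *)
Definition cl_residual (L : lmodType R) (S : L -> Prop) : Prop :=
  forall (M : lmodType R) (N P : M -> Prop),
    is_submodule N -> is_submodule P -> (forall x, P x -> N x) ->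
    forall (Q : lmodType R) (pi : {linear M -> Q}),
      (forall q, exists x, pi x = q) ->
      (forall x, pi x = 0 <-> P x) ->
      forall u, subset_cl S N u <-> subset_cl S (image_set pi N) (pi u).

End Tensor.

(** In [Z[L x M]] the class of [s (x) u] lies in [im(L (x) N -> L (x) M)]
    exactly when the generator [(s, u)] lies in the subgroup spanned by the
    tensor relations together with the pairs [(l, n)], [n \in N].  A map
    [h : M -> M'] that is additive and [R]-linear modulo [N'] and sends [N]
    into [N'] induces [(l, m) |-> (l, h m)], which preserves these subgroups.
    Linear maps give functoriality.  For residuality, a set-theoretic section
    of [pi : M -> M/P] is linear modulo [P], which lies in [N], and [u]
    differs from the section of [pi u] by an element of [P]. *)
From mathcomp Require Import all_boot all_order all_algebra freeg.
Set Implicit Arguments. Unset Strict Implicit. Unset Printing Implicit Defensive.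
Import GRing.Theory.
Local Open Scope ring_scope.

Section ZSpan.
Variable G : zmodType.
Implicit Types A B : G -> Prop.

Lemma zspanN A x : zspan A x -> zspan A (- x).
Proof. by move=> Ax; rewrite -sub0r; apply: zspan_sub => //; apply: zspan0. Qed.

Lemma zspanD A x y : zspan A x -> zspan A y -> zspan A (x + y).
Proof. by move=> Ax /zspanN Ay; rewrite -[y]opprK; apply: zspan_sub. Qed.

Lemma zspanS A B : (forall x, A x -> B x) -> forall x, zspan A x -> zspan B x.
Proof.
move=> sAB x; elim=> [|y /sAB By|y z _ Ay _ Az]; last exact: zspan_sub.
  exact: zspan0.
exact: zspan_gen.
Qed.

End ZSpan.

Lemma zspan_additive (G H : zmodType) (f : G -> H) A B :
  {morph f : x y / x - y} ->
  (forall x, A x -> zspan B (f x)) -> forall x, zspan A x -> zspan B (f x).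
Proof.
move=> fB fAB x; elim=> [|y /fAB //|y z _ By _ Bz]; last first.
  by rewrite fB; apply: zspan_sub.
by rewrite -(subrr 0) fB subrr; apply: zspan0.
Qed.

Lemma surjective_section (A B : choiceType) (f : A -> B) :
  (forall b, exists a, f a = b) -> {g : B -> A | cancel g f}.
Proof.
move=> f_surj; have ex_pre b : exists a, f a == b.
  by have [a <-] := f_surj b; exists a.
by exists (fun b => xchoose (ex_pre b)) => b; apply/eqP/(xchooseP (ex_pre b)).
Qed.

Section SubsetClosure.
Variables (R : comPzRingType) (L : lmodType R).

(* Its span is the preimage in [Z[L x M]] of [im(L (x) N -> L (x) M)]. *)
Definition tensor_image_rel (M : lmodType R) (N : M -> Prop) (x : tfree L M) :=
  tensor_rel x \/ tensor_image_gen N x.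

Section Span.
Variables (M : lmodType R) (N : M -> Prop).
Local Notation span := (zspan (tensor_image_rel N)).

Lemma tensor_in_imageE s u : tensor_in_image N s u <-> span (tgen s u).
Proof.
split=> [[x [Nx rel_ux]]|].
  rewrite -(subrK x (tgen s u)); apply: zspanD.
    by apply: zspanS rel_ux => y; left.
  by apply: zspanS Nx => y; right.
rewrite /tensor_in_image /tensor_eq.
elim=> [|y [rel_y|N_y]|y z _ [x [Nx ryx]] _ [x' [Nx' rzx']]].
- by exists 0; split; rewrite ?subrr; apply: zspan0.
- by exists 0; split; rewrite ?subr0; [apply: zspan0 | apply: zspan_gen].
- by exists y; split; rewrite ?subrr; [apply: zspan_gen | apply: zspan0].
exists (x - x'); split; first exact: zspan_sub.
have -> : y - z - (x - x') = (y - x) - (z - x').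
  by rewrite !opprD !opprK addrACA.
exact: zspan_sub.
Qed.

Lemma tgen_span l n : N n -> span (tgen l n).
Proof. by move=> Nn; apply/zspan_gen; right; exists l, n. Qed.

Lemma tgenDl_span l1 l2 m : span (tgen (l1 + l2) m - tgen l1 m - tgen l2 m).
Proof. by apply/zspan_gen; left; left; exists l1, l2, m. Qed.

Lemma tgenDr_span l m1 m2 : span (tgen l (m1 + m2) - tgen l m1 - tgen l m2).
Proof. by apply/zspan_gen; left; right; left; exists l, m1, m2. Qed.

Lemma tgenZ_span (r : R) l m : span (tgen (r *: l) m - tgen l (r *: m)).
Proof. by apply/zspan_gen; left; right; right; exists r, l, m. Qed.

Lemma tgen_congr_span l m m' : N (m - m') -> span (tgen l m - tgen l m').
Proof.
move=> Nmm'; have split_m : tgen l m - tgen l m' =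
    (tgen l (m' + (m - m')) - tgen l m' - tgen l (m - m')) + tgen l (m - m').
  by rewrite subrK [m' + _]addrC subrK.
by rewrite split_m; apply: zspanD; [apply: tgenDr_span | apply: tgen_span].
Qed.

End Span.

Section TensorMap.
Variables (M M' : lmodType R) (h : M -> M').

Definition tmap (x : tfree L M) : tfree L M' :=
  fglift (fun p : L * M => tgen p.1 (h p.2) : tfree L M') x.

Lemma tmapB : {morph tmap : x y / x - y}.
Proof. exact: lift_is_additive. Qed.

Lemma tmap_tgen l m : tmap (tgen l m) = tgen l (h m).
Proof. by rewrite /tmap /tgen liftU scale1r. Qed.

Variables (N : M -> Prop) (N' : M' -> Prop).
Hypotheses (hD : forall a b, N' (h (a + b) - (h a + h b)))
           (hZ : forall (r : R) a, N' (h (r *: a) - r *: h a))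
           (hN : forall n, N n -> N' (h n)).

Lemma tmap_span x :
  zspan (tensor_image_rel N) x -> zspan (tensor_image_rel N') (tmap x).
Proof.
move: x; apply: (@zspan_additive _ _ tmap _ _ tmapB).
move=> x [[[l1 [l2 [m ->]]]|[[l [m1 [m2 ->]]]|[r [l [m ->]]]]]|].
- by rewrite !tmapB !tmap_tgen; apply: tgenDl_span.
- rewrite !tmapB !tmap_tgen.
  have := tgenDr_span N' l (h m1) (h m2).
  move/(zspanD (tgen_congr_span l (hD m1 m2))).
  by rewrite !addrA subrK.
- rewrite tmapB !tmap_tgen.
  have := zspanN (tgen_congr_span l (hZ r m)); rewrite opprB.
  by move/(zspanD (tgenZ_span N' r l (h m))); rewrite addrA subrK.
- by move=> [l [n [Nn ->]]]; rewrite tmap_tgen; apply/tgen_span/hN.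
Qed.

Lemma subset_cl_map (S : L -> Prop) u : subset_cl S N u -> subset_cl S N' (h u).
Proof.
move=> clu s Ss; apply/tensor_in_imageE; rewrite -tmap_tgen.
exact/tmap_span/tensor_in_imageE/clu.
Qed.

End TensorMap.

Lemma subset_cl_congr (S : L -> Prop) (M : lmodType R) (N : M -> Prop) u v :
  N (u - v) -> subset_cl S N v -> subset_cl S N u.
Proof.
move=> Nuv clv s Ss; apply/tensor_in_imageE.
rewrite -(subrK (tgen s v) (tgen s u)); apply: zspanD.
  exact: tgen_congr_span.
exact/tensor_in_imageE/clv.
Qed.

Lemma subset_cl_functorial (S : L -> Prop) : cl_functorial S.
Proof.
move=> M M' g N [N0 _] u; apply: subset_cl_map => [a b|r a|n Nn].
- by rewrite raddfD subrr; exists 0; rewrite raddf0.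
- by rewrite linearZ subrr; exists 0; rewrite raddf0.
- by exists n.
Qed.

Lemma subset_cl_residual (S : L -> Prop) : cl_residual S.
Proof.
move=> M N P subN _ sPN Q pi pi_surj kerP u.
split; first exact: subset_cl_functorial.
have [sec secK] := surjective_section pi_surj.
have N_of_eq x y : pi x = pi y -> N (x - y).
  by move=> pxy; apply/sPN/kerP; rewrite linearB pxy subrr.
move=> cl_pi_u; apply: (subset_cl_congr (v := sec (pi u))).
  exact: N_of_eq.
apply: (subset_cl_map (N := image_set pi N)) cl_pi_u => [a b|r a|_ [n [Nn <-]]].
- by apply: N_of_eq; rewrite linearD !secK.
- by apply: N_of_eq; rewrite linearZ !secK.
rewrite -(subrK n (sec (pi n))).
have [_ addN] := subN; rewrite -[_ - n]scale1r; apply: addN Nn.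
by apply: N_of_eq; rewrite secK.
Qed.

End SubsetClosure.

Theorem proposition7p4 (R : comPzRingType) (L : lmodType R) (S : L -> Prop) :
  cl_functorial S /\ cl_residual S.
Proof. by split; [apply: subset_cl_functorial | apply: subset_cl_residual]. Qed.
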